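(* Let $\Gamma$ be a $W$-generic metric graph, with $W:\Gamma\to\mathbb{R}$ of class $C^1$, and let $f_k$, $\lambda_k$ be the eigenfunctions and eigenvalues of $H_W=-\frac{\partial^2}{\partial x^2}+W$ with Dirichlet boundary and Neumann–Kirchhoff vertex conditions. Let $k_1<\dots<k_M$ and nonzero reals $a_1,\dots,a_M$ be given, and define $g(x,y)=\sum_{i=1}^{M}a_ie^{-\lambda_{k_i}y}f_{k_i}(x)$ for $x\in\Gamma$, $y\in\mathbb{R}$. Then $g$ has no isolated zero $(x_0,y_0)$ with $x_0$ in the interior of an edge.
   Context: A metric graph is connected with finitely many edges of finite length, each identified with an interval. $H_W$ acts edgewise on $\bigoplus_e H^2(e)$ with Dirichlet conditions at degree-one vertices and, at inner vertices (degree $\ge2$), continuity and vanishing sum of the outgoing derivatives. Eigenvalues $\lambda_1\le\lambda_2\le\dots$ are counted with multiplicity, with $L^2$-orthogonal eigenfunctions $f_k$. $\Gamma$ is $W$-generic if no eigenfunction of $H_W$ vanishes at an inner vertex. An isolated zero of $g$ is a zero $(x_0,y_0)$ having a neighbourhood in (edge interior)$\times\mathbb{R}$ containing no other zero of $g$. *)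

From Stdlib Require Import Reals Lra.
From Coquelicot Require Import Coquelicot.
Open Scope R_scope.

(* ---------- Metric graphs ----------
   Vertices are 0..nV-1, edges 0..nE-1.  Edge e is identified with the
   interval [0, len e]; coordinate 0 is the vertex [src e], coordinate
   [len e] is the vertex [tgt e]. *)
Record metric_graph := MkGraph {
  nV : nat;
  nE : nat;
  src : nat -> nat;
  tgt : nat -> nat;
  len : nat -> R;
  src_ok : forall e, (e < nE)%nat -> (src e < nV)%nat;
  tgt_ok : forall e, (e < nE)%nat -> (tgt e < nV)%nat;
  len_pos : forall e, (e < nE)%nat -> 0 < len e
}.

Definition adjacent (G : metric_graph) (u v : nat) : Prop :=
  exists e, (e < nE G)%nat /\
    ((src G e = u /\ tgt G e = v) \/ (src G e = v /\ tgt G e = u)).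

Inductive reach (G : metric_graph) : nat -> nat -> Prop :=
  | reach_refl : forall v, reach G v v
  | reach_step : forall u v w, reach G u v -> adjacent G v w -> reach G u w.

Definition graph_connected (G : metric_graph) : Prop :=
  forall u v, (u < nV G)%nat -> (v < nV G)%nat -> reach G u v.

Fixpoint sumn_R (n : nat) (f : nat -> R) : R :=
  match n with O => 0 | S m => sumn_R m f + f m end.

(* degree of a vertex (a loop contributes 2) *)
Fixpoint count_nat (n : nat) (P : nat -> bool) : nat :=
  match n with O => O | S m => (count_nat m P + (if P m then 1 else 0))%nat end.

Definition degree (G : metric_graph) (v : nat) : nat :=
  (count_nat (nE G) (fun e => Nat.eqb (src G e) v) +
   count_nat (nE G) (fun e => Nat.eqb (tgt G e) v))%nat.

Definition inner_vertex (G : metric_graph) (v : nat) : Prop :=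
  (v < nV G)%nat /\ (2 <= degree G v)%nat.

Definition boundary_vertex (G : metric_graph) (v : nat) : Prop :=
  (v < nV G)%nat /\ degree G v = 1%nat.

(* A function on the graph: edgewise, F e t for t in [0, len e]. *)
Definition gfun := nat -> R -> R.

Definition cont_on (a b : R) (f : R -> R) : Prop :=
  forall t, a <= t <= b ->
    filterlim f (within (fun u => a <= u <= b) (locally t)) (locally (f t)).

(* f is C^1 on [a,b]: derivative on (a,b) which extends continuously to [a,b];
   df is that derivative (its endpoint values are the one-sided derivatives). *)
Definition C1_on (a b : R) (f df : R -> R) : Prop :=
  cont_on a b f /\ cont_on a b df /\
  forall t, a < t < b -> is_derive f t (df t).

Definition vertex_values_eq (G : metric_graph) (F : gfun) (v : nat) (c : R) : Prop :=
  forall e, (e < nE G)%nat ->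
    (src G e = v -> F e 0 = c) /\ (tgt G e = v -> F e (len G e) = c).

Definition continuous_at_vertex (G : metric_graph) (F : gfun) (v : nat) : Prop :=
  exists c, vertex_values_eq G F v c.

Definition vanishes_at_vertex (G : metric_graph) (F : gfun) (v : nat) : Prop :=
  exists e, (e < nE G)%nat /\
    ((src G e = v /\ F e 0 = 0) \/ (tgt G e = v /\ F e (len G e) = 0)).

Definition out_deriv_sum (G : metric_graph) (dF : gfun) (v : nat) : R :=
  sumn_R (nE G) (fun e =>
    (if Nat.eqb (src G e) v then dF e 0 else 0) +
    (if Nat.eqb (tgt G e) v then - dF e (len G e) else 0)).

Definition potential_C1 (G : metric_graph) (W : gfun) : Prop :=
  (forall e, (e < nE G)%nat -> exists dW, C1_on 0 (len G e) (W e) (dW e)) /\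
  (forall v, (v < nV G)%nat -> continuous_at_vertex G W v).

(* The edgewise H^2 regularity is rendered classically. *)
Definition is_eigenfunction (G : metric_graph) (W : gfun) (mu : R) (h : gfun) : Prop :=
  exists dh : gfun,
    (forall e, (e < nE G)%nat ->
       C1_on 0 (len G e) (h e) (dh e) /\
       forall t, 0 < t < len G e ->
         ex_derive (dh e) t /\
         - Derive (dh e) t + W e t * h e t = mu * h e t) /\
    (forall v, boundary_vertex G v -> vertex_values_eq G h v 0) /\
    (forall v, inner_vertex G v ->
       continuous_at_vertex G h v /\ out_deriv_sum G dh v = 0) /\
    (exists e t, (e < nE G)%nat /\ 0 < t < len G e /\ h e t <> 0).

Definition L2_inner (G : metric_graph) (f h : gfun) : R :=
  sumn_R (nE G) (fun e => RInt (fun t => f e t * h e t) 0 (len G e)).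

(* (lam k, f k)_{k in nat}: the eigenvalues in nondecreasing order counted
   with multiplicity, with pairwise L^2-orthogonal eigenfunctions; every
   eigenfunction of H_W lies in the span of the f k with the same eigenvalue
   (so the sequence exhausts the spectrum with the right multiplicities). *)
Definition eigen_system (G : metric_graph) (W : gfun) (lam : nat -> R) (f : nat -> gfun) : Prop :=
  (forall k, lam k <= lam (S k)) /\
  (forall k, is_eigenfunction G W (lam k) (f k)) /\
  (forall j k, j <> k -> L2_inner G (f j) (f k) = 0) /\
  (forall mu h, is_eigenfunction G W mu h ->
     exists (N : nat) (c : nat -> R),
       (forall k, lam k <> mu -> c k = 0) /\
       forall e t, (e < nE G)%nat -> 0 <= t <= len G e ->
         h e t = sumn_R N (fun k => c k * f k e t)).

Definition W_generic (G : metric_graph) (W : gfun) : Prop :=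
  forall mu h, is_eigenfunction G W mu h ->
    forall v, inner_vertex G v -> ~ vanishes_at_vertex G h v.

Definition heat_comb (lam : nat -> R) (f : nat -> gfun) (M : nat) (kk : nat -> nat)
  (a : nat -> R) (e : nat) (t y : R) : R :=
  sumn_R M (fun i => a i * exp (- lam (kk i) * y) * f (kk i) e t).

Definition isolated_interior_zero (G : metric_graph) (g : nat -> R -> R -> R)
  (e : nat) (t0 y0 : R) : Prop :=
  (e < nE G)%nat /\ 0 < t0 < len G e /\ g e t0 y0 = 0 /\
  exists delta, 0 < delta /\
    forall t y, 0 < t < len G e -> Rabs (t - t0) < delta -> Rabs (y - y0) < delta ->
      g e t y = 0 -> t = t0 /\ y = y0.

(* On an edge, g solves the heat equation  d_y g = d_t^2 g - W g  with y as time.  If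
   (t0, y0) were an isolated zero, g would not vanish on the parabolic boundary (bottom and
   sides) of a small box [t0 - r, t0 + r] x [y0 - rho, y0], hence would have one sign there.
   Multiplying by +-exp (- K y) makes that sign positive and the potential nonnegative, and
   the parabolic minimum principle then keeps the function positive on the top edge of the
   box, in particular at (t0, y0). *)

From Stdlib Require Import Reals Lra Lia ClassicalEpsilon.
From Coquelicot Require Import Coquelicot.
Open Scope R_scope.

Lemma is_derive_neg_right (f : R -> R) x D :
  is_derive f x D -> D < 0 ->
  exists h, 0 < h /\ forall u, 0 < u <= h -> f (x + u) < f x.
Proof.
  intros Hd HD. apply is_derive_Reals in Hd.
  destruct (Hd (- D / 2)) as [delta Hdelta]; [lra|].
  pose proof (cond_pos delta) as Hdelta_pos.
  exists (delta / 2). split; [lra|]. intros u Hu.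
  specialize (Hdelta u ltac:(lra) ltac:(rewrite Rabs_right; lra)).
  apply Rabs_def2 in Hdelta.
  assert (Hq : (f (x + u) - f x) / u * u = f (x + u) - f x) by (field; lra).
  nra.
Qed.

Lemma is_derive_nonneg_at_left_min (f : R -> R) x b D :
  x < b -> is_derive f x D -> (forall y, x <= y <= b -> f x <= f y) -> 0 <= D.
Proof.
  intros Hxb Hd Hmin. apply Rnot_lt_le. intros HD.
  destruct (is_derive_neg_right f x D Hd HD) as [h [Hh Hlt]].
  assert (Hu : 0 < Rmin h (b - x) <= h) by (split; [apply Rmin_case|apply Rmin_l]; lra).
  specialize (Hlt _ Hu).
  assert (Rmin h (b - x) <= b - x) by apply Rmin_r.
  specialize (Hmin (x + Rmin h (b - x)) ltac:(lra)). lra.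
Qed.

Lemma is_derive_nonpos_at_right_min (f : R -> R) x c D :
  c < x -> is_derive f x D -> (forall y, c <= y <= x -> f x <= f y) -> D <= 0.
Proof.
  intros Hcx Hd Hmin.
  assert (Hd' : is_derive (fun y => f (- y)) (- x) (- D)).
  { replace (- D) with (scal (-1) D) by (unfold scal; simpl; unfold mult; simpl; ring).
    apply (is_derive_comp f Ropp (- x) D (-1)).
    - rewrite Ropp_involutive. exact Hd.
    - apply (is_derive_ext (fun y => - y)); [reflexivity|].
      auto_derive; [exact I|ring]. }
  enough (0 <= - D) by lra.
  apply (is_derive_nonneg_at_left_min (fun y => f (- y)) (- x) (- c)); [lra|exact Hd'|].
  intros y Hy. rewrite Ropp_involutive. apply Hmin. lra.
Qed.

Lemma is_derive2_nonneg_at_interior_min (f f1 : R -> R) a b t d2 :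
  a < t < b -> (forall s, a < s < b -> is_derive f s (f1 s)) ->
  is_derive f1 t d2 -> (forall s, a < s < b -> f t <= f s) -> 0 <= d2.
Proof.
  intros Ht Hd1 Hd2 Hmin.
  assert (Hcrit : f1 t = 0).
  { apply Rle_antisym.
    - apply (is_derive_nonpos_at_right_min f t ((a + t) / 2)); [lra|auto|].
      intros y Hy. apply Hmin. lra.
    - apply (is_derive_nonneg_at_left_min f t ((t + b) / 2)); [lra|auto|].
      intros y Hy. apply Hmin. lra. }
  apply Rnot_lt_le. intros Hneg.
  destruct (is_derive_neg_right f1 t d2 Hd2 Hneg) as [h [Hh Hf1]].
  set (u := Rmin h ((b - t) / 2)).
  assert (Hu : 0 < u <= h /\ u <= (b - t) / 2)
    by (unfold u; repeat split; [apply Rmin_case| apply Rmin_l| apply Rmin_r]; lra).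
  destruct (MVT_cor2 f f1 t (t + u)) as [xi [Hmvt Hxi]]; [lra| |].
  { intros s Hs. apply is_derive_Reals, Hd1. lra. }
  specialize (Hf1 (xi - t) ltac:(lra)). replace (t + (xi - t)) with xi in Hf1 by ring.
  specialize (Hmin (t + u) ltac:(lra)). nra.
Qed.

Lemma continuous_nonzero_same_sign (f : R -> R) x y :
  (forall z, x <= z <= y -> continuity_pt f z) -> (forall z, x <= z <= y -> f z <> 0) ->
  forall z, x <= z <= y -> 0 < f x * f z.
Proof.
  intros Hc Hnz z Hz.
  assert (Hneg : forall g : R -> R, (forall z, x <= z <= y -> continuity_pt g z) ->
                   (forall z, x <= z <= y -> g z <> 0) -> g x < 0 -> g z < 0).
  { intros g Hgc Hgnz Hgx. destruct (Rle_lt_or_eq_dec x z) as [Hxz|<-]; [lra| |exact Hgx].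
    apply Rnot_le_lt. intros Hgz.
    assert (Hgz' : 0 < g z) by (destruct Hgz; [lra|]; exfalso; apply (Hgnz z); auto).
    destruct (Ranalysis5.IVT_interv g x z) as [w [Hw Hgw]]; auto.
    - intros w Hw. apply Hgc. lra.
    - apply (Hgnz w); [lra|exact Hgw]. }
  assert (Hfx : f x <> 0) by (apply Hnz; lra).
  destruct (Rlt_or_le (f x) 0) as [Hlt|Hle].
  - pose proof (Hneg f Hc Hnz Hlt). nra.
  - assert (Hopp : - f z < 0).
    { apply (Hneg (fun s => - f s)).
      - intros w Hw. apply continuity_pt_opp, Hc, Hw.
      - intros w Hw. apply Ropp_neq_0_compat, Hnz, Hw.
      - destruct Hle; [lra|congruence]. }
    destruct Hle as [Hgt|]; [nra|congruence].
Qed.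

Definition equicontinuous_in_y (v : R -> R -> R) (a b : R) : Prop :=
  forall y eps, 0 < eps -> exists delta, 0 < delta /\
    forall y' t, Rabs (y' - y) < delta -> a <= t <= b -> Rabs (v t y' - v t y) < eps.

Lemma equicontinuous_in_y_indep (phi : R -> R) a b :
  equicontinuous_in_y (fun t _ => phi t) a b.
Proof.
  intros y eps Heps. exists 1. split; [lra|]. intros y' t _ _.
  rewrite Rminus_diag, Rabs_R0. exact Heps.
Qed.

Lemma equicontinuous_in_y_of_continuous (al : R -> R) a b :
  (forall y, continuity_pt al y) -> equicontinuous_in_y (fun _ y => al y) a b.
Proof.
  intros Hal y eps Heps.
  destruct (proj1 (continuity_pt_locally al y) (Hal y) (mkposreal eps Heps)) as [delta Hdelta].
  exists delta. split; [apply cond_pos|]. intros y' t Hy' _. exact (Hdelta y' Hy').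
Qed.

Lemma equicontinuous_in_y_plus (u v : R -> R -> R) a b :
  equicontinuous_in_y u a b -> equicontinuous_in_y v a b ->
  equicontinuous_in_y (fun t y => u t y + v t y) a b.
Proof.
  intros Hu Hv y eps Heps.
  destruct (Hu y (eps / 2)) as [du [Hdu Hu']]; [lra|].
  destruct (Hv y (eps / 2)) as [dv [Hdv Hv']]; [lra|].
  exists (Rmin du dv). split; [apply Rmin_case; lra|]. intros y' t Hy' Ht.
  specialize (Hu' y' t (Rlt_le_trans _ _ _ Hy' (Rmin_l du dv)) Ht).
  specialize (Hv' y' t (Rlt_le_trans _ _ _ Hy' (Rmin_r du dv)) Ht).
  replace (u t y' + v t y' - (u t y + v t y)) with ((u t y' - u t y) + (v t y' - v t y)) by ring.
  eapply Rle_lt_trans; [apply Rabs_triang|lra].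
Qed.

Lemma equicontinuous_in_y_sub (v : R -> R -> R) a b a' b' :
  a <= a' -> b' <= b -> equicontinuous_in_y v a b -> equicontinuous_in_y v a' b'.
Proof.
  intros Ha Hb Hv y eps Heps. destruct (Hv y eps Heps) as [delta [Hdelta Hv']].
  exists delta. split; [exact Hdelta|]. intros y' t Hy' Ht. apply Hv'; [exact Hy'|lra].
Qed.

Lemma equicontinuous_in_y_scale (al : R -> R) (u : R -> R -> R) a b :
  a <= b -> (forall y, continuity_pt al y) ->
  (forall t y, a <= t <= b -> continuity_pt (fun s => u s y) t) ->
  equicontinuous_in_y u a b -> equicontinuous_in_y (fun t y => al y * u t y) a b.
Proof.
  intros Hab Hal Hcu Hu y eps Heps.
  destruct (continuity_ab_maj (fun t => Rabs (u t y)) a b Hab) as [tm [Hbound _]].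
  { intros t Ht. apply (continuity_pt_comp (fun s => u s y) Rabs); [auto|apply Rcontinuity_abs]. }
  set (B := Rabs (u tm y) + 1). set (A := Rabs (al y) + 1).
  assert (HB : 0 < B) by (unfold B; pose proof (Rabs_pos (u tm y)); lra).
  assert (HA : 0 < A) by (unfold A; pose proof (Rabs_pos (al y)); lra).
  assert (Heps1 : 0 < Rmin 1 (eps / (2 * B))) by (apply Rmin_case; [lra|apply Rdiv_lt_0_compat; lra]).
  destruct (proj1 (continuity_pt_locally al y) (Hal y) (mkposreal _ Heps1)) as [d1 Hd1].
  destruct (Hu y (eps / (2 * A))) as [d2 [Hd2 Hu']]; [apply Rdiv_lt_0_compat; lra|].
  exists (Rmin d1 d2). split; [apply Rmin_case; [apply cond_pos|lra]|]. intros y' t Hy' Ht.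
  specialize (Hd1 y' (Rlt_le_trans _ _ _ Hy' (Rmin_l d1 d2))). simpl in Hd1.
  specialize (Hu' y' t (Rlt_le_trans _ _ _ Hy' (Rmin_r d1 d2)) Ht).
  specialize (Hbound t Ht). simpl in Hbound.
  pose proof (Rmin_l 1 (eps / (2 * B))) as Hmin1. pose proof (Rmin_r 1 (eps / (2 * B))) as Hmin2.
  assert (Hal' : Rabs (al y') <= A).
  { unfold A. pose proof (Rabs_triang_inv (al y') (al y)). lra. }
  assert (HeA : A * (eps / (2 * A)) = eps / 2) by (field; lra).
  assert (HeB : B * (eps / (2 * B)) = eps / 2) by (field; lra).
  replace (al y' * u t y' - al y * u t y)
    with (al y' * (u t y' - u t y) + (al y' - al y) * u t y) by ring.
  eapply Rle_lt_trans; [apply Rabs_triang|]. rewrite !Rabs_mult.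
  pose proof (Rabs_pos (al y')). pose proof (Rabs_pos (u t y' - u t y)).
  pose proof (Rabs_pos (al y' - al y)). pose proof (Rabs_pos (u t y)).
  assert (Rabs (u t y) <= B) by (unfold B; lra).
  nra.
Qed.

Lemma argmin_value_continuous (v : R -> R -> R) (T : R -> R) a b :
  equicontinuous_in_y v a b ->
  (forall y, a <= T y <= b /\ forall t, a <= t <= b -> v (T y) y <= v t y) ->
  forall y, continuity_pt (fun y => v (T y) y) y.
Proof.
  intros Hv HT y. apply continuity_pt_locally. intros eps.
  destruct (Hv y eps (cond_pos eps)) as [delta [Hdelta Hv']].
  exists (mkposreal delta Hdelta). intros y' Hy'. change (Rabs (y' - y) < delta) in Hy'.
  destruct (HT y) as [HTy Hminy]. destruct (HT y') as [HTy' Hminy'].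
  pose proof (Hv' y' (T y) Hy' HTy) as E1. pose proof (Hv' y' (T y') Hy' HTy') as E2.
  pose proof (Hminy (T y') HTy'). pose proof (Hminy' (T y) HTy).
  apply Rabs_def2 in E1. apply Rabs_def2 in E2. apply Rabs_def1; lra.
Qed.

Lemma equicontinuous_rectangle_min (v : R -> R -> R) a b c d :
  a <= b -> c <= d ->
  (forall t y, a <= t <= b -> continuity_pt (fun s => v s y) t) ->
  equicontinuous_in_y v a b ->
  exists t1 y1, a <= t1 <= b /\ c <= y1 <= d /\
    forall t y, a <= t <= b -> c <= y <= d -> v t1 y1 <= v t y.
Proof.
  intros Hab Hcd Hc Hv.
  destruct (choice (fun y t1 => a <= t1 <= b /\ forall t, a <= t <= b -> v t1 y <= v t y))
    as [T HT].
  { intros y. destruct (continuity_ab_min (fun s => v s y) a b Hab (fun t Ht => Hc t y Ht))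
      as [t1 [Hmin Ht1]].
    exists t1. split; auto. }
  destruct (continuity_ab_min (fun y => v (T y) y) c d Hcd
              (fun y _ => argmin_value_continuous v T a b Hv HT y)) as [y1 [Hmin Hy1]].
  exists (T y1), y1. split; [apply HT|]. split; [exact Hy1|].
  intros t y Ht Hy. specialize (Hmin y Hy). simpl in Hmin.
  pose proof (proj2 (HT y) t Ht). lra.
Qed.

Definition heat_solution (q : R -> R) (v v1 v2 : R -> R -> R) (a b : R) : Prop :=
  (forall t y, a <= t <= b ->
     is_derive (fun s => v s y) t (v1 t y) /\ is_derive (fun s => v1 s y) t (v2 t y)) /\
  (forall t y, a <= t <= b -> is_derive (v t) y (v2 t y - q t * v t y)).

Definition parabolic_boundary (P : R -> Prop) (v : R -> R -> R) (a b c d : R) : Prop :=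
  (forall t, a <= t <= b -> P (v t c)) /\ (forall y, c <= y <= d -> P (v a y) /\ P (v b y)).

Lemma heat_solution_continuous_t q v v1 v2 a b :
  heat_solution q v v1 v2 a b ->
  forall t y, a <= t <= b -> continuity_pt (fun s => v s y) t.
Proof.
  intros [Hdt _] t y Ht. apply derivable_continuous_pt. exists (v1 t y).
  apply is_derive_Reals, (Hdt t y Ht).
Qed.

Lemma heat_solution_continuous_y q v v1 v2 a b :
  heat_solution q v v1 v2 a b -> forall t y, a <= t <= b -> continuity_pt (v t) y.
Proof.
  intros [_ Hdy] t y Ht. apply derivable_continuous_pt. eexists.
  apply is_derive_Reals, (Hdy t y Ht).
Qed.

Lemma heat_solution_sub q v v1 v2 a b a' b' :
  a <= a' -> b' <= b -> heat_solution q v v1 v2 a b -> heat_solution q v v1 v2 a' b'.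
Proof.
  intros Ha Hb [Hdt Hdy]. split; intros t y Ht; [apply Hdt|apply Hdy]; lra.
Qed.

Lemma continuity_pt_scaled_exp s K y : continuity_pt (fun y => s * exp (- K * y)) y.
Proof.
  apply derivable_continuous_pt. exists (s * (- K * exp (- K * y))).
  apply is_derive_Reals. auto_derive; [exact I|ring].
Qed.

Lemma heat_solution_exp_scale q K s v v1 v2 a b :
  heat_solution q v v1 v2 a b ->
  heat_solution (fun t => q t + K) (fun t y => s * exp (- K * y) * v t y)
    (fun t y => s * exp (- K * y) * v1 t y) (fun t y => s * exp (- K * y) * v2 t y) a b.
Proof.
  intros [Hdt Hdy]. split.
  - intros t y Ht. destruct (Hdt t y Ht). split; apply is_derive_scal; assumption.
  - intros t y Ht.
    replace (s * exp (- K * y) * v2 t y - (q t + K) * (s * exp (- K * y) * v t y))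
      with (plus (mult (s * (- K * exp (- K * y))) (v t y))
                 (mult (s * exp (- K * y)) (v2 t y - q t * v t y)))
      by (unfold plus, mult; simpl; ring).
    apply (is_derive_mult (fun y => s * exp (- K * y)) (v t)).
    + auto_derive; [exact I|ring].
    + exact (Hdy t y Ht).
    + intros; apply Rmult_comm.
Qed.

Lemma continuous_pos_lower_bound (f : R -> R) a b :
  a <= b -> (forall t, a <= t <= b -> continuity_pt f t) -> (forall t, a <= t <= b -> 0 < f t) ->
  exists mu, 0 < mu /\ forall t, a <= t <= b -> mu <= f t.
Proof.
  intros Hab Hc Hpos. destruct (continuity_ab_min f a b Hab Hc) as [tm [Hmin Htm]].
  exists (f tm). split; auto.
Qed.

Lemma parabolic_boundary_lower_bound (v : R -> R -> R) a b c d :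
  a <= b -> c <= d ->
  (forall t y, a <= t <= b -> continuity_pt (fun s => v s y) t) ->
  (forall t y, a <= t <= b -> continuity_pt (v t) y) ->
  parabolic_boundary (Rlt 0) v a b c d ->
  exists mu, 0 < mu /\ parabolic_boundary (Rle mu) v a b c d.
Proof.
  intros Hab Hcd Hct Hcy [Hbot Hside].
  destruct (continuous_pos_lower_bound (fun t => v t c) a b) as [m1 [Hm1 Hb1]]; auto.
  destruct (continuous_pos_lower_bound (v a) c d) as [m2 [Hm2 Hb2]]; auto.
  { intros y _. apply Hcy. lra. }
  { intros y Hy. apply Hside, Hy. }
  destruct (continuous_pos_lower_bound (v b) c d) as [m3 [Hm3 Hb3]]; auto.
  { intros y _. apply Hcy. lra. }
  { intros y Hy. apply Hside, Hy. }
  exists (Rmin m1 (Rmin m2 m3)).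
  pose proof (Rmin_l m1 (Rmin m2 m3)). pose proof (Rmin_r m1 (Rmin m2 m3)).
  pose proof (Rmin_l m2 m3). pose proof (Rmin_r m2 m3).
  split; [repeat apply Rmin_case; lra|]. split.
  - intros t Ht. specialize (Hb1 t Ht). simpl in Hb1. lra.
  - intros y Hy. specialize (Hb2 y Hy). specialize (Hb3 y Hy). lra.
Qed.

Lemma parabolic_boundary_same_sign (g : R -> R -> R) a b c d :
  a <= b -> c <= d ->
  (forall t y, a <= t <= b -> continuity_pt (fun s => g s y) t) ->
  (forall t y, a <= t <= b -> continuity_pt (g t) y) ->
  parabolic_boundary (fun x => x <> 0) g a b c d ->
  parabolic_boundary (fun x => 0 < g a c * x) g a b c d.
Proof.
  intros Hab Hcd Hct Hcy [Hbot Hside].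
  assert (Hsign_bot : forall t, a <= t <= b -> 0 < g a c * g t c)
    by exact (continuous_nonzero_same_sign (fun s => g s c) a b (fun t Ht => Hct t c Ht) Hbot).
  assert (Hsign_side : forall t y, (t = a \/ t = b) -> c <= y <= d -> 0 < g t c * g t y).
  { intros t y Hab' Hy.
    apply (continuous_nonzero_same_sign (g t) c d); [|intros z Hz|exact Hy].
    - intros z _. apply Hcy. destruct Hab' as [->| ->]; lra.
    - destruct Hab' as [->| ->]; apply Hside, Hz. }
  split; [exact Hsign_bot|]. intros y Hy. split.
  - exact (Hsign_side a y (or_introl eq_refl) Hy).
  - pose proof (Hsign_bot b ltac:(lra)). pose proof (Hsign_side b y (or_intror eq_refl) Hy).
    nra.
Qed.

Lemma heat_solution_perturbed_min_pos q v v1 v2 a b c d C eps t1 y1 :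
  C * (d - c) < 1 -> 0 < eps -> (forall t, a <= t <= b -> 0 <= q t <= C) ->
  heat_solution q v v1 v2 a b -> a < t1 < b -> c < y1 <= d ->
  (forall t y, a <= t <= b -> c <= y <= d ->
     v t1 y1 + eps * (y1 - d) <= v t y + eps * (y - d)) ->
  0 < v t1 y1 + eps * (y1 - d).
Proof.
  intros HC Heps Hq [Hdt Hdy] Ht1 Hy1 Hmin.
  assert (Htt : 0 <= v2 t1 y1).
  { apply (is_derive2_nonneg_at_interior_min (fun s => v s y1 + eps * (y1 - d))
             (fun s => v1 s y1) a b t1);
      [exact Ht1| |apply Hdt; lra|intros s Hs; apply Hmin; lra].
    intros s Hs. rewrite <- (Rplus_0_r (v1 s y1)).
    apply (is_derive_plus (fun s => v s y1) (fun _ => eps * (y1 - d))).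
    - apply Hdt. lra.
    - auto_derive; reflexivity. }
  assert (Hyy : v2 t1 y1 - q t1 * v t1 y1 + eps <= 0).
  { apply (is_derive_nonpos_at_right_min (fun y => v t1 y + eps * (y - d)) y1 c);
      [lra| |intros y Hy; apply Hmin; lra].
    apply (is_derive_plus (v t1) (fun y => eps * (y - d))); [apply Hdy; lra|].
    auto_derive; [exact I|ring]. }
  (* hence q v >= eps at the minimum, which 0 <= q <= C and v <= eps (d - c) forbid *)
  destruct (Hq t1 ltac:(lra)) as [Hq0 HqC]. destruct Hy1 as [Hcy1 _].
  apply Rnot_le_lt. intros Hw.
  assert (Hv_pos : 0 < v t1 y1) by nra.
  assert (Hv_le : v t1 y1 <= eps * (d - c)) by nra.
  assert (Hqv : q t1 * v t1 y1 <= C * (eps * (d - c))).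
  { apply Rle_trans with (C * v t1 y1); [apply Rmult_le_compat_r|apply Rmult_le_compat_l]; lra. }
  nra.
Qed.

Lemma heat_min_principle q v v1 v2 a b c d C :
  a < b -> c < d -> C * (d - c) < 1 ->
  (forall t, a <= t <= b -> 0 <= q t <= C) ->
  heat_solution q v v1 v2 a b -> equicontinuous_in_y v a b ->
  parabolic_boundary (Rlt 0) v a b c d ->
  forall t, a < t < b -> 0 < v t d.
Proof.
  intros Hab Hcd HC Hq Hsol Hequi Hpos t0 Ht0.
  pose proof (heat_solution_continuous_t q v v1 v2 a b Hsol) as Hct.
  pose proof (heat_solution_continuous_y q v v1 v2 a b Hsol) as Hcy.
  destruct (parabolic_boundary_lower_bound v a b c d) as [mu [Hmu [Hbot Hside]]]; auto; try lra.
  apply Rnot_le_lt. intros Hneg.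
  (* perturb by eps (y - d) so that a nonpositive minimum violates the equation strictly *)
  set (eps := mu / (2 * (d - c))).
  assert (Heps : 0 < eps) by (apply Rdiv_lt_0_compat; lra).
  assert (Heps_mu : eps * (d - c) = mu / 2) by (unfold eps; field; lra).
  destruct (equicontinuous_rectangle_min (fun t y => v t y + eps * (y - d)) a b c d)
    as [t1 [y1 [Ht1 [Hy1 Hmin]]]]; try lra.
  { intros t y Ht. apply continuity_pt_plus; [auto|apply continuity_pt_const; intros ? ?; auto]. }
  { apply equicontinuous_in_y_plus; [exact Hequi|].
    apply (equicontinuous_in_y_of_continuous (fun y => eps * (y - d))). intros y.
    apply derivable_continuous_pt. eexists. apply is_derive_Reals. auto_derive; reflexivity. }
  assert (Hw_min : v t1 y1 + eps * (y1 - d) <= 0) by (specialize (Hmin t0 d ltac:(lra) ltac:(lra)); lra).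
  assert (Hw_side : forall y, c <= y <= d -> 0 < v a y + eps * (y - d) /\ 0 < v b y + eps * (y - d)).
  { intros y Hy. destruct (Hside y Hy). assert (eps * (y - d) >= - (mu / 2)) by nra. lra. }
  assert (Ht1' : a < t1 < b).
  { destruct (Hw_side y1 Hy1). destruct Ht1 as [[? | <-] [? | ->]]; lra. }
  assert (Hy1' : c < y1).
  { destruct Hy1 as [[? | <-] _]; [lra|]. specialize (Hbot t1 Ht1). lra. }
  pose proof (heat_solution_perturbed_min_pos q v v1 v2 a b c d C eps t1 y1
                HC Heps Hq Hsol Ht1' (conj Hy1' (proj2 Hy1)) Hmin).
  lra.
Qed.

Lemma heat_solution_nonzero_on_top W K C g g1 g2 a b c d :
  a < b -> c < d -> C * (d - c) < 1 ->
  (forall t, a <= t <= b -> 0 <= W t + K <= C) ->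
  heat_solution W g g1 g2 a b -> equicontinuous_in_y g a b ->
  parabolic_boundary (fun x => x <> 0) g a b c d ->
  forall t, a < t < b -> g t d <> 0.
Proof.
  intros Hab Hcd HC HWK Hsol Hequi Hnz t Ht Hzero.
  pose proof (heat_solution_continuous_t W g g1 g2 a b Hsol) as Hct.
  destruct (parabolic_boundary_same_sign g a b c d) as [Hbot Hside]; try lra; auto.
  { exact (heat_solution_continuous_y W g g1 g2 a b Hsol). }
  set (s := g a c).
  assert (Hpos : 0 < s * exp (- K * d) * g t d).
  { apply (heat_min_principle (fun t => W t + K) (fun t y => s * exp (- K * y) * g t y)
             (fun t y => s * exp (- K * y) * g1 t y) (fun t y => s * exp (- K * y) * g2 t y)
             a b c d C); auto.
    - apply heat_solution_exp_scale, Hsol.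
    - apply equicontinuous_in_y_scale; [lra|apply continuity_pt_scaled_exp|exact Hct|exact Hequi].
    - assert (Hfactor : forall y x, 0 < s * x -> 0 < s * exp (- K * y) * x).
      { intros y x Hx. replace (s * exp (- K * y) * x) with (exp (- K * y) * (s * x)) by ring.
        apply Rmult_lt_0_compat; [apply exp_pos|exact Hx]. }
      split.
      + intros t' Ht'. apply Hfactor, Hbot, Ht'.
      + intros y Hy. destruct (Hside y Hy). split; apply Hfactor; assumption. }
  rewrite Hzero, Rmult_0_r in Hpos. lra.
Qed.

Lemma continuity_pt_shifted_bounds (W : R -> R) t0 :
  continuity_pt W t0 ->
  exists r K C, 0 < r /\ forall t, Rabs (t - t0) < r -> 0 <= W t + K <= C.
Proof.
  intros HW. destruct (proj1 (continuity_pt_locally W t0) HW (mkposreal 1 Rlt_0_1)) as [r Hr].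
  exists r, (Rabs (W t0) + 1), (2 * Rabs (W t0) + 2). split; [apply cond_pos|].
  intros t Ht. specialize (Hr t Ht). simpl in Hr. apply Rabs_def2 in Hr.
  pose proof (Rle_abs (W t0)). pose proof (Rle_abs (- W t0)). rewrite Rabs_Ropp in *. lra.
Qed.

Lemma exists_pos_below x y : 0 < x -> 0 < y -> exists z, 0 < z /\ z < x /\ z < y.
Proof.
  intros Hx Hy. exists (Rmin x y / 2).
  pose proof (Rmin_l x y). pose proof (Rmin_r x y).
  assert (0 < Rmin x y) by (apply Rmin_case; lra). lra.
Qed.

Lemma heat_solution_zero_not_isolated W g g1 g2 a b t0 y0 delta :
  a < t0 < b -> continuity_pt W t0 ->
  heat_solution W g g1 g2 a b -> equicontinuous_in_y g a b ->
  g t0 y0 = 0 -> 0 < delta ->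
  ~ (forall t y, a < t < b -> Rabs (t - t0) < delta -> Rabs (y - y0) < delta ->
       g t y = 0 -> t = t0 /\ y = y0).
Proof.
  intros Ht0 HW Hsol Hequi Hz Hdelta Hiso.
  destruct (continuity_pt_shifted_bounds W t0 HW) as [r1 [K [C [Hr1 HWK]]]].
  assert (HC : 0 <= C) by (specialize (HWK t0 ltac:(rewrite Rminus_diag, Rabs_R0; lra)); lra).
  destruct (exists_pos_below r1 delta) as [r2 [Hr2 [Hr2_1 Hr2_2]]]; try lra.
  destruct (exists_pos_below (t0 - a) (b - t0)) as [r3 [Hr3 [Hr3_1 Hr3_2]]]; try lra.
  destruct (exists_pos_below r2 r3) as [r [Hr [Hr_2 Hr_3]]]; try lra.
  destruct (exists_pos_below delta (/ (C + 1))) as [rho [Hrho [Hrho_1 Hrho_2]]];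
    [lra|apply Rinv_0_lt_compat; lra|].
  assert (HCrho : C * rho < 1).
  { assert ((C + 1) * / (C + 1) = 1) by (field; lra). nra. }
  apply (heat_solution_nonzero_on_top W K C g g1 g2 (t0 - r) (t0 + r) (y0 - rho) y0)
    with (t := t0); [lra|lra| | | | | |lra|exact Hz].
  - replace (y0 - (y0 - rho)) with rho by ring. exact HCrho.
  - intros t Ht. apply HWK, Rabs_def1; lra.
  - apply (heat_solution_sub W g g1 g2 a b); [lra|lra|exact Hsol].
  - apply (equicontinuous_in_y_sub g a b); [lra|lra|exact Hequi].
  - split.
    + intros t Ht Hg. destruct (Hiso t (y0 - rho)) as [_ Hy];
        [lra|apply Rabs_def1; lra|apply Rabs_def1; lra|exact Hg|lra].
    + intros y Hy. split; intros Hg.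
      * destruct (Hiso (t0 - r) y) as [Ht _];
          [lra|apply Rabs_def1; lra|apply Rabs_def1; lra|exact Hg|lra].
      * destruct (Hiso (t0 + r) y) as [Ht _];
          [lra|apply Rabs_def1; lra|apply Rabs_def1; lra|exact Hg|lra].
Qed.

Lemma sumn_R_minus_scal n (F G : nat -> R) c :
  sumn_R n F - c * sumn_R n G = sumn_R n (fun i => F i - c * G i).
Proof. induction n as [|n IH]; simpl; [ring|]. rewrite <- IH. ring. Qed.

Lemma is_derive_sumn n (F : nat -> R -> R) (dF : nat -> R) x :
  (forall i, (i < n)%nat -> is_derive (F i) x (dF i)) ->
  is_derive (fun x => sumn_R n (fun i => F i x)) x (sumn_R n dF).
Proof.
  induction n as [|n IH]; simpl; intros Hd.
  - exact (is_derive_const 0 x).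
  - apply (is_derive_plus (fun x => sumn_R n (fun i => F i x)) (F n)).
    + apply IH. intros i Hi. apply Hd. lia.
    + apply Hd. lia.
Qed.

Lemma equicontinuous_in_y_sumn n (F : nat -> R -> R -> R) a b :
  (forall i, (i < n)%nat -> equicontinuous_in_y (F i) a b) ->
  equicontinuous_in_y (fun t y => sumn_R n (fun i => F i t y)) a b.
Proof.
  induction n as [|n IH]; simpl; intros HF.
  - exact (equicontinuous_in_y_indep (fun _ => 0) a b).
  - apply (equicontinuous_in_y_plus (fun t y => sumn_R n (fun i => F i t y)) (F n)).
    + apply IH. intros i Hi. apply HF. lia.
    + apply HF. lia.
Qed.

Lemma locally_open_interval a b t : a < t < b -> locally t (fun s => a < s < b).
Proof.
  intros Ht. assert (Hr : 0 < Rmin (t - a) (b - t)) by (apply Rmin_case; lra).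
  exists (mkposreal _ Hr). intros s Hs. change (Rabs (s - t) < Rmin (t - a) (b - t)) in Hs.
  pose proof (Rmin_l (t - a) (b - t)). pose proof (Rmin_r (t - a) (b - t)).
  apply Rabs_def2 in Hs. lra.
Qed.

Lemma cont_on_continuity_pt a b f t : cont_on a b f -> a < t < b -> continuity_pt f t.
Proof.
  intros Hf Ht. apply continuity_pt_filterlim. intros P HP.
  specialize (Hf t ltac:(lra) P HP). unfold filtermap, within in *.
  apply (filter_imp (fun s => a < s < b /\ (a <= s <= b -> P (f s)))).
  - intros s [Hs HPs]. apply HPs. lra.
  - apply filter_and; [apply locally_open_interval, Ht|exact Hf].
Qed.

Lemma eigenfunction_is_derive G W mu h e t :
  is_eigenfunction G W mu h -> (e < nE G)%nat -> 0 < t < len G e ->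
  is_derive (h e) t (Derive (h e) t) /\ is_derive (Derive (h e)) t ((W e t - mu) * h e t).
Proof.
  intros [dh [Hdh _]] He Ht.
  destruct (Hdh e He) as [[_ [_ Hd]] Hin].
  assert (HD : forall s, 0 < s < len G e -> Derive (h e) s = dh e s)
    by (intros s Hs; apply is_derive_unique, Hd, Hs).
  split.
  - rewrite HD by exact Ht. apply Hd, Ht.
  - destruct (Hin t Ht) as [Hex Heq].
    apply (is_derive_ext_loc (dh e)).
    + generalize (locally_open_interval 0 (len G e) t Ht). apply filter_imp.
      intros s Hs. symmetry. apply HD, Hs.
    + replace ((W e t - mu) * h e t) with (Derive (dh e) t) by lra.
      apply Derive_correct, Hex.
Qed.

Definition heat_comb_dt (lam : nat -> R) (f : nat -> gfun) (M : nat) (kk : nat -> nat)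
  (a : nat -> R) (e : nat) (t y : R) : R :=
  sumn_R M (fun i => a i * exp (- lam (kk i) * y) * Derive (f (kk i) e) t).

Definition heat_comb_dtt (W : gfun) (lam : nat -> R) (f : nat -> gfun) (M : nat)
  (kk : nat -> nat) (a : nat -> R) (e : nat) (t y : R) : R :=
  sumn_R M (fun i => a i * exp (- lam (kk i) * y) * ((W e t - lam (kk i)) * f (kk i) e t)).

Lemma heat_comb_heat_solution G W lam f M kk a e ta tb :
  (forall k, is_eigenfunction G W (lam k) (f k)) -> (e < nE G)%nat -> 0 < ta -> tb < len G e ->
  heat_solution (W e) (heat_comb lam f M kk a e) (heat_comb_dt lam f M kk a e)
    (heat_comb_dtt W lam f M kk a e) ta tb.
Proof.
  intros Heig He Hta Htb. unfold heat_comb, heat_comb_dt, heat_comb_dtt. split.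
  - intros t y Ht. split.
    + apply (is_derive_sumn M (fun i s => a i * exp (- lam (kk i) * y) * f (kk i) e s)).
      intros i _. apply is_derive_scal.
      apply (eigenfunction_is_derive G W (lam (kk i))); auto; lra.
    + apply (is_derive_sumn M (fun i s => a i * exp (- lam (kk i) * y) * Derive (f (kk i) e) s)).
      intros i _. apply is_derive_scal.
      apply (eigenfunction_is_derive G W (lam (kk i))); auto; lra.
  - intros t y Ht. rewrite sumn_R_minus_scal.
    apply (is_derive_sumn M (fun i y => a i * exp (- lam (kk i) * y) * f (kk i) e t)).
    intros i _. auto_derive; [exact I|ring].
Qed.

Lemma heat_comb_equicontinuous G W lam f M kk a e ta tb :
  (forall k, is_eigenfunction G W (lam k) (f k)) -> (e < nE G)%nat ->
  0 < ta -> ta <= tb -> tb < len G e ->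
  equicontinuous_in_y (heat_comb lam f M kk a e) ta tb.
Proof.
  intros Heig He Hta Hab Htb. unfold heat_comb.
  apply (equicontinuous_in_y_sumn M (fun i t y => a i * exp (- lam (kk i) * y) * f (kk i) e t)).
  intros i _.
  apply (equicontinuous_in_y_scale (fun y => a i * exp (- lam (kk i) * y)) (fun t _ => f (kk i) e t));
    [exact Hab|apply continuity_pt_scaled_exp|intros t y Ht|apply equicontinuous_in_y_indep].
  apply derivable_continuous_pt. exists (Derive (f (kk i) e) t). apply is_derive_Reals.
  apply (eigenfunction_is_derive G W (lam (kk i))); auto; lra.
Qed.

Theorem lemma6 (G : metric_graph) (W : gfun) (lam : nat -> R) (f : nat -> gfun)
  (M : nat) (kk : nat -> nat) (a : nat -> R) :
  graph_connected G ->
  potential_C1 G W ->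
  eigen_system G W lam f ->
  W_generic G W ->
  (forall i j, (i < j)%nat -> (j < M)%nat -> (kk i < kk j)%nat) ->
  (forall i, (i < M)%nat -> a i <> 0) ->
  forall e t0 y0, ~ isolated_interior_zero G (heat_comb lam f M kk a) e t0 y0.
Proof.
  intros _ [HW _] [_ [Heig _]] _ _ _ e t0 y0 [He [Ht0 [Hz [delta [Hdelta Hiso]]]]].
  destruct (HW e He) as [dW [HWcont _]].
  set (ta := t0 / 2). set (tb := (t0 + len G e) / 2).
  apply (heat_solution_zero_not_isolated (W e) (heat_comb lam f M kk a e)
           (heat_comb_dt lam f M kk a e) (heat_comb_dtt W lam f M kk a e) ta tb t0 y0 delta).
  - unfold ta, tb. lra.
  - apply (cont_on_continuity_pt 0 (len G e)); [exact HWcont|lra].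
  - apply (heat_comb_heat_solution G); auto; unfold ta, tb; lra.
  - apply (heat_comb_equicontinuous G W); auto; unfold ta, tb; lra.
  - exact Hz.
  - exact Hdelta.
  - intros t y Ht. apply Hiso. unfold ta, tb in Ht. lra.
Qed.
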